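(* Let $\mathcal{M}\subseteq\mathbb{R}^d$ be a compact embedded $C^2$-submanifold without boundary with reach $\tau_{\mathcal{M}}>0$, let $\tau\in(0,\tau_{\mathcal{M}})$ and $\eta>0$. Then $$\inf_{x\in\mathcal{T}(\tau)}\Big(\tfrac12\operatorname{dist}_{\mathcal{M}\setminus B_\eta(\pi(x))}(x)^2-\tfrac12\operatorname{dist}_{\mathcal{M}}(x)^2\Big)\ge\frac12\,\frac{\tau_{\mathcal{M}}-\tau}{\tau_{\mathcal{M}}+\tau}\,\eta^2>0.$$
   Context: Reach $\tau_{\mathcal{M}}$: largest $\tau\ge0$ such that $(p,v)\mapsto p+v$ on $\{(p,v):p\in\mathcal{M},v\in N_p\mathcal{M},\|v\|<\tau\}$ is a diffeomorphism onto its image; $\mathcal{T}(\tau)=\{p+v:p\in\mathcal{M},v\in N_p\mathcal{M},\|v\|<\tau\}$; $\pi(x)$ is the unique closest point of $\mathcal{M}$ to $x\in\mathcal{T}(\tau_{\mathcal{M}})$. For a set $A$, $\operatorname{dist}_A(x)=\inf_{a\in A}\|x-a\|$ (with $\inf\emptyset=+\infty$), and $B_\eta(p)$ is the open Euclidean ball of radius $\eta$ centered at $p$. *)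

(* R^d is modelled as 'rV[R]_d with the
   Euclidean norm [enorm] defined below (the library's norm on matrices is
   the sup norm, so we do not use it for metric notions; topological notions
   such as [open], [compact], continuity, derivatives coincide). *)
From HB Require Import structures.
From mathcomp Require Import all_boot all_order all_algebra.
From mathcomp Require Import all_classical all_reals all_analysis.
Set Implicit Arguments. Unset Strict Implicit. Unset Printing Implicit Defensive.
Import Order.TTheory GRing.Theory Num.Theory.
Import numFieldNormedType.Exports.
Local Open Scope classical_set_scope.
Local Open Scope ring_scope.

Section Defs.
Variable R : realType.

Definition edot n (u v : 'rV[R]_n) : R := \sum_(i < n) u 0 i * v 0 i.
Definition enorm n (u : 'rV[R]_n) : R := Num.sqrt (edot u u).

Definition evec n (i : 'I_n) : 'rV[R]_n := delta_mx 0 i.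
Definition partial n m (f : 'rV[R]_n -> 'rV[R]_m) (i : 'I_n) (x : 'rV[R]_n)
  : 'rV[R]_m := derive f x (evec i).

Definition C1_on n m (U : set 'rV[R]_n) (f : 'rV[R]_n -> 'rV[R]_m) : Prop :=
  (forall x, U x -> {for x, continuous f}) /\
  (forall i x, U x -> derivable f x (evec i)) /\
  (forall i x, U x -> {for x, continuous (partial f i)}).
Definition C2_on n m (U : set 'rV[R]_n) (f : 'rV[R]_n -> 'rV[R]_m) : Prop :=
  C1_on U f /\ forall i, C1_on U (partial f i).

Definition jacobian n m (f : 'rV[R]_n -> 'rV[R]_m) (x : 'rV[R]_n) : 'M[R]_(n, m) :=
  \matrix_(i < n, j < m) partial f i x 0 j.

(* M is an embedded C^2 submanifold (without boundary) of R^d of dimension k: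
   locally the regular zero set of a C^2 map into R^(d-k). *)
Definition C2_submanifold d (k : nat) (M : set 'rV[R]_d) : Prop :=
  forall p, M p -> exists (U : set 'rV[R]_d) (F : 'rV[R]_d -> 'rV[R]_(d - k)),
    [/\ open U, U p, C2_on U F,
        M `&` U = [set x | U x /\ F x = 0] &
        \rank (jacobian F p) = (d - k)%N].

Definition tangent d (M : set 'rV[R]_d) (p v : 'rV[R]_d) : Prop :=
  exists g : R -> 'rV[R]_d,
    [/\ g 0 = p, exists2 e : R, 0 < e & (forall t : R, `|t| < e -> M (g t)),
        derivable g 0 1 & derive g 0 1 = v].

Definition normal d (M : set 'rV[R]_d) (p v : 'rV[R]_d) : Prop :=
  forall w, tangent M p w -> edot v w = 0.

Definition tube d (M : set 'rV[R]_d) (tau : R) : set 'rV[R]_d :=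
  [set x | exists p v, [/\ M p, normal M p v, enorm v < tau & x = p + v]].

(* (p,v) |-> p+v on {(p,v) : p in M, v in N_pM, |v| < tau} is a
   (C^1-)diffeomorphism onto its image: injective, with open image, and the
   inverse x |-> (G x, x - G x) is C^1 on the image. *)
Definition reach_cond d (M : set 'rV[R]_d) (tau : R) : Prop :=
  [/\ forall p v q w, M p -> normal M p v -> enorm v < tau ->
                      M q -> normal M q w -> enorm w < tau ->
                      p + v = q + w -> p = q /\ v = w,
      open (tube M tau) &
      exists G : 'rV[R]_d -> 'rV[R]_d,
        C1_on (tube M tau) G /\
        forall p v, M p -> normal M p v -> enorm v < tau -> G (p + v) = p].

Definition is_reach d (M : set 'rV[R]_d) (tauM : R) : Prop :=
  [/\ 0 <= tauM, reach_cond M tauM &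
      forall t, 0 <= t -> reach_cond M t -> t <= tauM].

(* Euclidean open ball, distance to a set (inf over empty set = +oo) *)
Definition eball d (p : 'rV[R]_d) (eta : R) : set 'rV[R]_d :=
  [set y | enorm (y - p) < eta].
Definition dist_set d (A : set 'rV[R]_d) (x : 'rV[R]_d) : \bar R :=
  ereal_inf [set (enorm (x - a))%:E | a in A].

(* pi(x): the closest point of M to x (unique on T(tau_M)) *)
Definition nearest d (M : set 'rV[R]_d) (x : 'rV[R]_d) : 'rV[R]_d :=
  xget 0 [set p | M p /\ forall q, M q -> enorm (x - p) <= enorm (x - q)].

End Defs.

From HB Require Import structures.
From mathcomp Require Import all_boot all_order all_algebra.
From mathcomp Require Import all_classical all_reals all_analysis.
From mathcomp Require Import ring lra.
Import Order.TTheory GRing.Theory Num.Theory.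
Import numFieldNormedType.Exports.
Local Open Scope classical_set_scope.
Local Open Scope ring_scope.

(* Write x = p + v with p in M, v normal at p and |v| < tau.  By injectivity of
   the normal map up to tau_M, the nearest point of M to any p + w with w normal
   and |w| < tau_M is p itself (a nearest point q makes p + w - q normal at q).
   Taking w = r v/|v| with r < tau_M, the ball of radius r around p + w misses M,
   which reads 2 r <q - p, v> <= |v| |q - p|^2 for q in M.  With
   r = (tau_M + tau)/2 and |v| < tau this gives
   |x - q|^2 - |x - p|^2 >= (tau_M - tau)/(tau_M + tau) |q - p|^2,
   and |q - p| >= eta off the ball B_eta(p). *)

Lemma cvg_eq0_of_mul_ge0 {R : realType} {h : R -> R} {l e : R} : 0 < e ->
  h @ 0^' --> l -> (forall t, `|t| < e -> 0 <= t * h t) -> l = 0.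
Proof.
move=> e0 hl ht; apply/eqP; rewrite eq_le; apply/andP; split.
- apply: (closed_cvg _ (@closed_le R 0) _ _ (cvg_dnbhs_at_left hl)).
  near=> t.
  have t0 : t < 0 by near: t; exact: nbhs_left_lt.
  have te : - e < t by near: t; apply: nbhs_left_gt; rewrite oppr_lt0.
  by rewrite /= -(nmulr_rge0 _ t0) ht // ltr0_norm // ltrNl.
- apply: (closed_cvg _ (@closed_ge R 0) _ _ (cvg_dnbhs_at_right hl)).
  near=> t.
  have t0 : 0 < t by near: t; exact: nbhs_right_gt.
  have te : t < e by near: t; exact: nbhs_right_lt.
  by rewrite /= -(pmulr_rge0 _ t0) ht // gtr0_norm.
Unshelve. all: by end_near.
Qed.

Section EuclideanDot.
Context {R : realType} {d : nat}.
Implicit Types u v w : 'rV[R]_d.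

Lemma edotC u v : edot u v = edot v u.
Proof. by apply: eq_bigr => i _; rewrite mulrC. Qed.

Lemma edotDl u v w : edot (u + v) w = edot u w + edot v w.
Proof. by rewrite /edot -big_split; apply: eq_bigr => i _; rewrite mxE mulrDl. Qed.

Lemma edotDr u v w : edot w (u + v) = edot w u + edot w v.
Proof. by rewrite edotC edotDl !(edotC w). Qed.

Lemma edotZl a u v : edot (a *: u) v = a * edot u v.
Proof. by rewrite /edot mulr_sumr; apply: eq_bigr => i _; rewrite mxE mulrA. Qed.

Lemma edotZr a u v : edot v (a *: u) = a * edot v u.
Proof. by rewrite edotC edotZl edotC. Qed.

Lemma edotNl u v : edot (- u) v = - edot u v.
Proof. by rewrite -scaleN1r edotZl mulN1r. Qed.

Lemma edotNr u v : edot v (- u) = - edot v u.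
Proof. by rewrite edotC edotNl edotC. Qed.

Lemma edot0r u : edot u 0 = 0.
Proof. by rewrite /edot big1 // => i _; rewrite mxE mulr0. Qed.

Lemma edot_ge0 u : 0 <= edot u u.
Proof. by apply: sumr_ge0 => i _; rewrite -expr2 sqr_ge0. Qed.

Lemma edot_eq0 u : (edot u u == 0) = (u == 0).
Proof.
apply/eqP/eqP => [uu0|->]; last by rewrite /edot big1 // => i _; rewrite mxE mul0r.
apply/rowP => i; rewrite mxE; apply/eqP; rewrite -sqrf_eq0 expr2.
by apply/eqP; move/psumr_eq0P: uu0 => -> // j _; rewrite -expr2 sqr_ge0.
Qed.

Lemma edotDD u v : edot (u + v) (u + v) = edot u u + 2 * edot u v + edot v v.
Proof. by rewrite !edotDl !edotDr (edotC v u); ring. Qed.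

Lemma edotBB u v : edot (u - v) (u - v) = edot u u - 2 * edot u v + edot v v.
Proof. by rewrite edotDD edotNl !edotNr opprK mulrN. Qed.

Lemma enorm_ge0 u : 0 <= enorm u.
Proof. exact: sqrtr_ge0. Qed.

Lemma enorm0 : enorm (0 : 'rV[R]_d) = 0.
Proof. by rewrite /enorm edot0r sqrtr0. Qed.

Lemma enorm_sqr u : enorm u ^+ 2 = edot u u.
Proof. by rewrite sqr_sqrtr // edot_ge0. Qed.

Lemma enorm_gt0 u : (0 < enorm u) = (u != 0).
Proof. by rewrite sqrtr_gt0 lt_neqAle edot_ge0 andbT eq_sym edot_eq0. Qed.

Lemma enormZ a u : enorm (a *: u) = `|a| * enorm u.
Proof. by rewrite /enorm edotZl edotZr mulrA -expr2 sqrtrM ?sqr_ge0 // sqrtr_sqr. Qed.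

Lemma ler_enorm u v : (enorm u <= enorm v) = (edot u u <= edot v v).
Proof. by rewrite ler_sqrt // edot_ge0. Qed.

Lemma edot_cvg {T : Type} {F : set_system T} {FF : Filter F}
    {f g : T -> 'rV[R]_d} {u v} :
  f @ F --> u -> g @ F --> v -> (fun t => edot (f t) (g t)) @ F --> edot u v.
Proof.
move=> fu gv; apply: (@cvg_big R 'I_d +%R 0 xpredT add_continuous) => i _.
by apply: cvgM; apply: (continuous_cvg _ (@coord_continuous _ 1 d 0 i _)).
Qed.

End EuclideanDot.

Section NearestPoints.
Context {R : realType} {d : nat}.
Implicit Types (M : set 'rV[R]_d) (p q x y v w : 'rV[R]_d).

Definition is_nearest M y q :=
  M q /\ forall q', M q' -> enorm (y - q) <= enorm (y - q').

Definition normal_map_injective M (t : R) := forall p v q w,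
  M p -> normal M p v -> enorm v < t -> M q -> normal M q w -> enorm w < t ->
  p + v = q + w -> p = q /\ v = w.

Lemma normalZ {M p v} a : normal M p v -> normal M p (a *: v).
Proof. by move=> nv w tw; rewrite edotZl nv // mulr0. Qed.

Lemma is_nearest_normal {M y q} : is_nearest M y q -> normal M q (y - q).
Proof.
move=> [Mq qmin] w [g [g0 [e e0 gM] dg <-]].
set c := y - q.
pose D t := t^-1 *: ((g \o shift 0) (t *: 1) - g 0).
have Dw : D @ 0^' --> derive g 0 1 := dg.
pose h t := t * edot (D t) (D t) - 2 * edot c (D t).
have hw : h @ 0^' --> 0 * edot (derive g 0 1) (derive g 0 1) - 2 * edot c (derive g 0 1).
  have t0 : (fun t : R => t) @ 0^' --> (0 : R) by exact: cvg_within.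
  have := cvgB (cvgM t0 (edot_cvg Dw Dw)) (cvgM (cvg_cst _) (edot_cvg (cvg_cst c) Dw)); exact.
have th_ge0 t : `|t| < e -> 0 <= t * h t.
  move=> te; have [->|t0] := eqVneq t 0; first by rewrite mul0r.
  have gD : y - g t = c - t *: D t.
    by rewrite /D /= scalerA mulfV // scale1r /shift /= addr0 [t%:A]mulr1 g0 opprB addrA subrK.
  have -> : t * h t = edot (y - g t) (y - g t) - edot c c.
    rewrite gD /h; move: (D t) => u.
    by rewrite edotDD edotNl !edotNr !edotZl !edotZr; ring.
  by rewrite subr_ge0 -ler_enorm; apply/qmin/gM.
have := cvg_eq0_of_mul_ge0 e0 hw th_ge0.
by move/eqP; rewrite mul0r sub0r oppr_eq0 mulf_eq0 pnatr_eq0 => /eqP.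
Qed.

Lemma exists_nearest {M} y : compact M -> M !=set0 -> exists q, is_nearest M y q.
Proof.
move=> cM M0.
have cont : {within M, continuous (fun q => edot (y - q) (y - q))}.
  apply: continuous_subspaceT => x.
  have cy : (fun _ : 'rV[R]_d => y) @ x --> y by exact: (@cvg_cst _ y _ _ (nbhs_filter x)).
  have cx : (fun q : 'rV[R]_d => q) @ x --> x by exact: cvg_id.
  have yx : (fun q => y - q) @ x --> y - x by have := cvgB cy cx; exact.
  by have := edot_cvg yx yx; exact.
have [q Mq qmin] := compact_EVT_min M0 cM cont.
exists q; split; first by rewrite inE in Mq.
by move=> q' Mq'; rewrite ler_enorm qmin // inE.
Qed.

Lemma dist_set_nearest {M x q} : is_nearest M x q -> dist_set M x = (enorm (x - q))%:E.
Proof.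
move=> [Mq qmin]; apply/le_anti/andP; split.
- by apply: ereal_inf_lbound; exists q.
- by apply: le_ereal_inf_tmp => _ [q' Mq' <-]; rewrite lee_fin qmin.
Qed.

Lemma dist_set_sqr_ge {A : set 'rV[R]_d} {x b} : 0 <= b ->
  (forall a, A a -> b <= enorm (x - a)) -> ((b ^+ 2)%:E <= dist_set A x * dist_set A x)%E.
Proof.
move=> b0 bA; have bD : (b%:E <= dist_set A x)%E.
  by apply: le_ereal_inf_tmp => _ [a Aa <-]; rewrite lee_fin bA.
by rewrite expr2 EFinM lee_pmul.
Qed.

End NearestPoints.

Section Tube.
Context {R : realType} {d : nat}.
Context {M : set 'rV[R]_d} {tauM : R}.
Hypotheses (inj : normal_map_injective M tauM) (cM : compact M).
Implicit Types (p q v w : 'rV[R]_d).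

Lemma is_nearest_tube_uniq {p v q} : M p -> normal M p v -> enorm v < tauM ->
  is_nearest M (p + v) q -> q = p.
Proof.
move=> Mp nv vt qn; have [Mq qmin] := qn.
have qv : enorm (p + v - q) < tauM.
  by apply: le_lt_trans vt; have := qmin p Mp; rewrite [p + v]addrC addrK.
by case: (inj _ _ _ _ Mq (is_nearest_normal qn) qv Mp nv vt); rewrite // addrC subrK.
Qed.

Lemma is_nearest_tube {p v} : M p -> normal M p v -> enorm v < tauM ->
  is_nearest M (p + v) p.
Proof.
move=> Mp nv vt; have [q qn] := exists_nearest (p + v) cM (ex_intro _ p Mp).
by move: (qn); rewrite (is_nearest_tube_uniq Mp nv vt qn).
Qed.

Lemma nearest_tube {p v} : M p -> normal M p v -> enorm v < tauM -> nearest M (p + v) = p.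
Proof.
move=> Mp nv vt; apply: (is_nearest_tube_uniq Mp nv vt).
exact: (xgetPex 0 (ex_intro (is_nearest M (p + v)) p (is_nearest_tube Mp nv vt))).
Qed.

Lemma edot_normal_le {p v q r} : M p -> normal M p v -> M q -> 0 <= r < tauM ->
  2 * r * edot (q - p) v <= enorm v * edot (q - p) (q - p).
Proof.
move=> Mp nv Mq /andP[r0 rtau].
have [->|v0] := eqVneq v 0; first by rewrite edot0r enorm0 !mul0r mulr0.
have s0 : 0 < enorm v by rewrite enorm_gt0.
set w := (r / enorm v) *: v.
have wr : enorm w = r.
  by rewrite enormZ ger0_norm ?divfK ?gt_eqF // divr_ge0 // ltW.
have wt : enorm w < tauM by rewrite wr.
have := (is_nearest_tube Mp (normalZ (r / enorm v) nv) wt).2 q Mq.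
rewrite -/w addrAC subrr add0r ler_enorm.
have -> : p + w - q = w - (q - p) by rewrite opprB addrA [w + p]addrC.
rewrite [edot (w - _) _]edotBB -addrA lerDl edotC edotZr => ge0.
set X := edot (q - p) (q - p); set Y := edot (q - p) v.
have : 0 <= enorm v * (X - 2 * (r / enorm v * Y)) by rewrite pmulr_rge0 // addrC.
suff -> : enorm v * (X - 2 * (r / enorm v * Y)) = enorm v * X - 2 * r * Y by rewrite subr_ge0.
by field; rewrite gt_eqF.
Qed.

Lemma sqdist_tube_gap {p v q tau} : M p -> normal M p v -> enorm v < tau -> tau < tauM ->
  M q -> (tauM - tau) / (tauM + tau) * edot (q - p) (q - p)
         <= edot (p + v - q) (p + v - q) - edot v v.
Proof.
move=> Mp nv vt ttM Mq.
have t0 : 0 < tau := le_lt_trans (enorm_ge0 v) vt.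
have s0 : 0 < tauM + tau by lra.
have r_range : 0 <= (tauM + tau) / 2 < tauM by apply/andP; split; lra.
have := edot_normal_le Mp nv Mq r_range.
have -> : p + v - q = v - (q - p) by rewrite opprB addrA [v + p]addrC.
rewrite [edot (v - _) _]edotBB [edot v (q - p)]edotC.
set X := edot (q - p) (q - p); set Y := edot (q - p) v => YX.
have X0 : 0 <= X := edot_ge0 _.
rewrite -(ler_pM2r s0) (_ : _ * X * _ = (tauM - tau) * X); last by field; rewrite gt_eqF.
have : 0 <= (tau - enorm v) * X by rewrite mulr_ge0 // subr_ge0 ltW.
nra.
Qed.

End Tube.

Theorem lemma5 (R : realType) (d k : nat) (M : set 'rV[R]_d)
    (tauM tau eta : R) :
  (k <= d)%N -> C2_submanifold k M -> compact M ->
  is_reach M tauM -> 0 < tauM ->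
  0 < tau -> tau < tauM -> 0 < eta ->
  (((2^-1 * ((tauM - tau) / (tauM + tau)) * eta ^+ 2)%:E <=
    ereal_inf [set ((2^-1)%:E * (dist_set (M `\` eball (nearest M x) eta) x
                                  * dist_set (M `\` eball (nearest M x) eta) x)
                   - (2^-1)%:E * (dist_set M x * dist_set M x))%E
              | x in tube M tau])%E
   /\ 0 < 2^-1 * ((tauM - tau) / (tauM + tau)) * eta ^+ 2).
Proof.
move=> _ _ cM [_ [inj _ _] _] _ t0 ttM eta0.
set c := (tauM - tau) / (tauM + tau).
have c0 : 0 < c by rewrite divr_gt0 //; lra.
split; last by rewrite mulr_gt0 ?exprn_gt0 // mulr_gt0.
apply: le_ereal_inf_tmp => _ [_ [p [v [Mp nv vt ->]]] <-].
have vtM : enorm v < tauM := lt_trans vt ttM.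
have foot := is_nearest_tube inj cM Mp nv vtM.
rewrite (nearest_tube inj cM Mp nv vtM) (dist_set_nearest foot) addrAC subrr add0r.
have gap a : (M `\` eball p eta) a -> Num.sqrt (edot v v + c * eta ^+ 2) <= enorm (p + v - a).
  move=> [Ma /negP]; rewrite -leNgt => eta_le.
  rewrite ler_sqrt ?edot_ge0 //.
  have : eta ^+ 2 <= edot (a - p) (a - p).
    by rewrite -enorm_sqr ler_pXn2r ?nnegrE ?enorm_ge0 ?(ltW eta0).
  move=> /(ler_wpM2l (ltW c0)); have := sqdist_tube_gap inj cM Mp nv vt ttM Ma; rewrite -/c; lra.
have := dist_set_sqr_ge (sqrtr_ge0 _) gap.
rewrite sqr_sqrtr; last by rewrite addr_ge0 ?edot_ge0 // mulr_ge0 ?sqr_ge0 // ltW.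
have half_ge0 : (0 <= (2^-1)%:E :> \bar R)%E by rewrite lee_fin.
move=> /(lee_wpmul2l half_ge0) D2; apply: le_trans (leeB D2 (lexx _)).
by rewrite -!EFinM -EFinB lee_fin -expr2 enorm_sqr; lra.
Qed.
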